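(* Let $P_M=\frac{1}{2M}\sum_{i=1}^N\frac{\sigma_n^2d_i^\alpha}{\sigma_{v,i}^2}$. (a) For every $M\ge1$, $\mathrm{MSE}^{(M)}(P_M)\le\dfrac{1}{\sigma_\theta^{-2}+\frac13\sum_{i=1}^N\sigma_{v,i}^{-2}}$. (b) For every $\mathbf{h}$ with all entries nonzero and every $M\ge1$, $\dfrac{\sigma_\theta^2}{1+\zeta_M}\le\mathrm{MSE}_s(P_M;\mathbf{h})<\sigma_\theta^2$, where $\zeta_M=\frac{\mathbf{h}^H\mathbf{h}}{2M}\sum_{i=1}^N\frac{\sigma_\theta^2d_i^\alpha}{\sigma_{v,i}^2}$; if $\mathbf{h}$ has independent entries $h_i\sim\mathcal{CN}(0,d_i^{-\alpha})$ then $\zeta_M\to0$ in probability as $M\to\infty$. (c) For every $M$, $P>0$ and $\mathbf{h}$ with nonzero entries, both $\mathrm{MSE}^{(M)}(P)$ and $\mathrm{MSE}_s(P;\mathbf{h})$ are at least $\dfrac{1}{\sigma_\theta^{-2}+\sum_{i=1}^N\sigma_{v,i}^{-2}}$, are nonincreasing in $P$, and converge to this value as $P\to\infty$.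
   Context: Constants: $\sigma_\theta^2,\sigma_n^2>0$, $\sigma_{v,i}^2>0$, $d_i>0$, $\alpha>0$; $\mathbf{V}=\mathrm{diag}\{\sigma_{v,i}^2\}$. The LMMSE estimator of $\theta\sim\mathcal{CN}(0,\sigma_\theta^2)$ has mean squared error $1/(\sigma_\theta^{-2}+\text{SNR})$ in the multi-antenna case and $\sigma_\theta^2/(1+\text{SNR})$ in the single-antenna case. Multi-antenna (large-$M$): $g_M(x)=\sum_{i=1}^N\frac{Mx_i}{\sigma_n^2d_i^\alpha+\sigma_{v,i}^2Mx_i}$ for $x\in[0,\infty)^N$, $G_M(P)=\max\{g_M(x):x\ge0,\sum_ix_i=P\}$, $\mathrm{MSE}^{(M)}(P)=1/(\sigma_\theta^{-2}+G_M(P))$. Single-antenna: for $\mathbf{h}\in\mathbb{C}^N$, $\mathbf{F}=\mathrm{diag}\{h_i\}$, $\rho(\mathbf{a})=\frac{\sigma_\theta^2\mathbf{a}^H\mathbf{h}\mathbf{h}^H\mathbf{a}}{\mathbf{a}^H\mathbf{F}\mathbf{V}\mathbf{F}^H\mathbf{a}+\sigma_n^2}$, $S(P;\mathbf{h})=\max\{\rho(\mathbf{a}):\mathbf{a}^H\mathbf{a}=P\}$, and $\mathrm{MSE}_s(P;\mathbf{h})=\sigma_\theta^2/(1+S(P;\mathbf{h}))$. *)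

From Stdlib Require Import Reals Lra ClassicalEpsilon.
Open Scope R_scope.

(* Finite sum over indices 0..n-1 (sensor i = 1..N of the paper is index i-1). *)
Fixpoint rsum (n : nat) (f : nat -> R) : R :=
  match n with
  | O => 0
  | S k => rsum k f + f k
  end.

(* Supremum of a set of reals (least upper bound), chosen classically;
   0 if the set has no least upper bound. *)
Definition Rsup (E : R -> Prop) : R :=
  match excluded_middle_informative (exists m, is_lub E m) with
  | left H => proj1_sig (constructive_indefinite_description _ H)
  | right _ => 0
  end.

(* Complex numbers as pairs (real part, imaginary part). *)
Definition Cpx := (R * R)%type.
Definition Cnorm2 (z : Cpx) : R := fst z * fst z + snd z * snd z.
Definition Cnz (z : Cpx) : Prop := z <> (0, 0).
Definition Cconjmul (u v : Cpx) : Cpx :=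
  (fst u * fst v + snd u * snd v, fst u * snd v - snd u * fst v).
Definition Cinner (N : nat) (u v : nat -> Cpx) : Cpx :=
  (rsum N (fun i => fst (Cconjmul (u i) (v i))),
   rsum N (fun i => snd (Cconjmul (u i) (v i)))).

Section Model.
Variables (sth sn alpha : R) (N : nat) (sv d : nat -> R).
(* sth = sigma_theta^2, sn = sigma_n^2, sv i = sigma_{v,i}^2, d i = d_i *)

Definition gM (M : nat) (x : nat -> R) : R :=
  rsum N (fun i => INR M * x i /
                   (sn * Rpower (d i) alpha + sv i * INR M * x i)).

Definition GM (M : nat) (P : R) : R :=
  Rsup (fun y => exists x : nat -> R,
          (forall i, (i < N)%nat -> 0 <= x i) /\ rsum N x = P /\ y = gM M x).

Definition MSE_M (M : nat) (P : R) : R := 1 / (/ sth + GM M P).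

(* rho(a) = sth a^H h h^H a / (a^H F V F^H a + sn), with a^H h h^H a = |h^H a|^2
   and a^H F V F^H a = sum_i |a_i|^2 |h_i|^2 sigma_{v,i}^2. *)
Definition rho (h a : nat -> Cpx) : R :=
  sth * Cnorm2 (Cinner N h a) /
  (rsum N (fun i => Cnorm2 (a i) * Cnorm2 (h i) * sv i) + sn).

Definition Ssnr (P : R) (h : nat -> Cpx) : R :=
  Rsup (fun y => exists a : nat -> Cpx,
          rsum N (fun i => Cnorm2 (a i)) = P /\ y = rho h a).

Definition MSE_s (P : R) (h : nat -> Cpx) : R := sth / (1 + Ssnr P h).

Definition PM (M : nat) : R :=
  1 / (2 * INR M) * rsum N (fun i => sn * Rpower (d i) alpha / sv i).

Definition zetaM (M : nat) (h : nat -> Cpx) : R :=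
  rsum N (fun i => Cnorm2 (h i)) / (2 * INR M) *
  rsum N (fun i => sth * Rpower (d i) alpha / sv i).

Definition MSE_floor : R := 1 / (/ sth + rsum N (fun i => / sv i)).

End Model.

From Stdlib Require Import Reals Lra Lia Psatz ClassicalEpsilon.
Open Scope R_scope.

(* Both MSEs have the form 1 / (/ sth + G P), where the effective SNR G is
   nondecreasing in P (scale a feasible input up) and, by Cauchy-Schwarz, at most
   S = sum_i / sv_i.  Uniform power allocation (multi-antenna) and the matched
   filter a_i ~ h_i / (|h_i|^2 sv_i) (single antenna) come within O(1/P) of S,
   which gives (c).  At P_M the allocation x_i = sn d_i^alpha / (2 M sv_i) makes
   each term of g_M equal to 1 / (3 sv_i), which gives (a); the other
   Cauchy-Schwarz bound rho(a) <= sth |a|^2 |h|^2 / sn gives (b), because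
   sth P_M |h|^2 / sn = zeta_M. *)

Lemma rsum_ext n f g :
  (forall i, (i < n)%nat -> f i = g i) -> rsum n f = rsum n g.
Proof.
  induction n as [|n IH]; intros H; cbn [rsum]; [reflexivity|].
  rewrite IH by (intros; apply H; lia); rewrite H by lia; reflexivity.
Qed.

Lemma rsum_le n f g :
  (forall i, (i < n)%nat -> f i <= g i) -> rsum n f <= rsum n g.
Proof.
  induction n as [|n IH]; intros H; cbn [rsum]; [lra|].
  assert (rsum n f <= rsum n g) by (apply IH; intros; apply H; lia).
  specialize (H n ltac:(lia)); lra.
Qed.

Lemma rsum_const n c : rsum n (fun _ => c) = INR n * c.
Proof.
  induction n as [|n IH]; cbn [rsum]; [simpl; ring|].
  rewrite IH, S_INR; ring.
Qed.

Lemma rsum_nonneg n f : (forall i, (i < n)%nat -> 0 <= f i) -> 0 <= rsum n f.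
Proof.
  intros H; replace 0 with (rsum n (fun _ => 0)) by (rewrite rsum_const; ring).
  apply rsum_le; exact H.
Qed.

Lemma rsum_pos n f :
  (1 <= n)%nat -> (forall i, (i < n)%nat -> 0 < f i) -> 0 < rsum n f.
Proof.
  destruct n as [|n]; [lia|]; intros _ H; cbn [rsum].
  assert (0 <= rsum n f) by (apply rsum_nonneg; intros; apply Rlt_le, H; lia).
  specialize (H n ltac:(lia)); lra.
Qed.

Lemma rsum_inv_pos n w : (1 <= n)%nat -> (forall i, (i < n)%nat -> 0 < w i) ->
  0 < rsum n (fun i => / w i).
Proof. intros Hn Hw; apply rsum_pos; [exact Hn | intros; apply Rinv_0_lt_compat; auto]. Qed.

Lemma rsum_scal n c f : rsum n (fun i => c * f i) = c * rsum n f.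
Proof. induction n as [|n IH]; cbn [rsum]; [|rewrite IH]; ring. Qed.

Lemma rsum_plus n f g : rsum n (fun i => f i + g i) = rsum n f + rsum n g.
Proof. induction n as [|n IH]; cbn [rsum]; [|rewrite IH]; ring. Qed.

Lemma rsum_minus n f g : rsum n (fun i => f i - g i) = rsum n f - rsum n g.
Proof. induction n as [|n IH]; cbn [rsum]; [|rewrite IH]; ring. Qed.

Lemma Rdiv_le_cross a b a' b' :
  0 < b -> 0 < b' -> a * b' <= a' * b -> a / b <= a' / b'.
Proof.
  intros Hb Hb' H.
  replace (a / b) with (a * b' * / (b * b')) by (field; lra).
  replace (a' / b') with (a' * b * / (b * b')) by (field; lra).
  apply Rmult_le_compat_r; [left; apply Rinv_0_lt_compat; nra | exact H].
Qed.

Lemma Rdiv_le_of_le_mult a b c : 0 < b -> a <= c * b -> a / b <= c.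
Proof.
  intros Hb H; replace c with (c * b / b) by (field; lra).
  apply Rmult_le_compat_r; [left; apply Rinv_0_lt_compat|]; lra.
Qed.

Lemma psd_quadratic_form A B C v y :
  0 <= B -> 0 <= C -> A ^ 2 <= B * C -> 0 <= B * v ^ 2 - 2 * A * y * v + C * y ^ 2.
Proof.
  intros HB HC HA; destruct (Req_dec B 0) as [->|HB0].
  - assert (A = 0) by nra; subst A; nra.
  - assert (0 <= B * (B * v ^ 2 - 2 * A * y * v + C * y ^ 2)); [|nra].
    replace (B * (B * v ^ 2 - 2 * A * y * v + C * y ^ 2))
      with ((B * v - A * y) ^ 2 + (B * C - A ^ 2) * y ^ 2) by ring.
    apply Rplus_le_le_0_compat; [apply pow2_ge_0 | apply Rmult_le_pos; [lra | apply pow2_ge_0]].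
Qed.

Lemma rsum_sqr_le_weighted n x w : (forall i, (i < n)%nat -> 0 < w i) ->
  (rsum n x) ^ 2 <= rsum n (fun i => x i ^ 2 / w i) * rsum n w.
Proof.
  induction n as [|n IH]; intros Hw; cbn [rsum]; [lra|].
  set (A := rsum n x); set (B := rsum n (fun i => x i ^ 2 / w i)); set (C := rsum n w).
  assert (HA : A ^ 2 <= B * C) by (apply IH; intros; apply Hw; lia).
  assert (HB : 0 <= B).
  { apply rsum_nonneg; intros i Hi.
    apply Rle_mult_inv_pos; [nra | apply Hw; lia]. }
  assert (HC : 0 <= C) by (apply rsum_nonneg; intros i Hi; left; apply Hw; lia).
  assert (Hv : 0 < w n) by (apply Hw; lia).
  pose proof (psd_quadratic_form A B C (w n) (x n) HB HC HA) as Hq.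
  replace ((B + x n ^ 2 / w n) * (C + w n))
    with (B * C + x n ^ 2 + (B * w n ^ 2 + C * x n ^ 2) / w n) by (field; lra).
  assert (2 * A * x n * w n <= B * w n ^ 2 + C * x n ^ 2) by lra.
  assert (2 * A * x n <= (B * w n ^ 2 + C * x n ^ 2) / w n).
  { apply (Rmult_le_reg_r (w n)); [lra|].
    replace ((B * w n ^ 2 + C * x n ^ 2) / w n * w n)
      with (B * w n ^ 2 + C * x n ^ 2) by (field; lra); lra. }
  nra.
Qed.

Lemma Cnorm2_nonneg z : 0 <= Cnorm2 z.
Proof. unfold Cnorm2; nra. Qed.

Lemma Cnorm2_pos z : Cnz z -> 0 < Cnorm2 z.
Proof.
  unfold Cnz, Cnorm2; destruct z as [p q]; simpl; intros H.
  destruct (Req_dec p 0), (Req_dec q 0); subst; [now exfalso; apply H| nra ..].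
Qed.

Lemma Cnorm2_conjmul u v : Cnorm2 (Cconjmul u v) = Cnorm2 u * Cnorm2 v.
Proof. destruct u, v; unfold Cnorm2, Cconjmul; simpl; ring. Qed.

Lemma Cinner_norm2_le n u v w : (forall i, (i < n)%nat -> 0 < w i) ->
  Cnorm2 (Cinner n u v)
    <= rsum n (fun i => Cnorm2 (u i) * Cnorm2 (v i) / w i) * rsum n w.
Proof.
  intros Hw; unfold Cinner, Cnorm2 at 1; cbn [fst snd].
  pose proof (rsum_sqr_le_weighted n (fun i => fst (Cconjmul (u i) (v i))) w Hw).
  pose proof (rsum_sqr_le_weighted n (fun i => snd (Cconjmul (u i) (v i))) w Hw).
  replace (rsum n (fun i => Cnorm2 (u i) * Cnorm2 (v i) / w i))
    with (rsum n (fun i => fst (Cconjmul (u i) (v i)) ^ 2 / w i)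
          + rsum n (fun i => snd (Cconjmul (u i) (v i)) ^ 2 / w i)).
  - nra.
  - rewrite <- rsum_plus; apply rsum_ext; intros i Hi.
    rewrite <- Cnorm2_conjmul; unfold Cnorm2.
    specialize (Hw i Hi); field; lra.
Qed.

Lemma Rsup_is_lub (E : R -> Prop) y0 b :
  E y0 -> (forall y, E y -> y <= b) -> is_lub E (Rsup E).
Proof.
  intros Hy Hb; unfold Rsup.
  destruct (excluded_middle_informative _) as [H|H].
  - exact (proj2_sig (constructive_indefinite_description _ H)).
  - exfalso; apply H.
    destruct (completeness E) as [m Hm]; [exists b; exact Hb | exists y0; exact Hy |].
    exists m; exact Hm.
Qed.

Lemma INR_ge1 M : (1 <= M)%nat -> 1 <= INR M.
Proof. intros; change 1 with (INR 1); apply le_INR; lia. Qed.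

Lemma INR_cv_infty : cv_infty INR.
Proof.
  intros A; destruct (INR_unbounded A) as [n Hn]; exists n; intros m Hm.
  apply le_INR in Hm; lra.
Qed.

Definition decreasing_floor (f : R -> R) (L : R) : Prop :=
  (forall P, 0 < P -> L <= f P)
  /\ (forall P1 P2, 0 < P1 -> P1 <= P2 -> f P2 <= f P1)
  /\ (forall eps, 0 < eps -> exists P0, forall P, P0 <= P -> Rabs (f P - L) < eps).

Lemma inv_snr_gap q G S : 0 < q -> 0 <= G -> G <= S ->
  0 <= 1 / (/ q + G) - 1 / (/ q + S) <= (S - G) * q ^ 2.
Proof.
  intros Hq HG HS; assert (Hu : 0 < / q) by (apply Rinv_0_lt_compat; lra).
  replace (1 / (/ q + G) - 1 / (/ q + S)) with ((S - G) * / ((/ q + G) * (/ q + S)))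
    by (field; repeat split; nra).
  split; [apply Rle_mult_inv_pos; nra|].
  apply Rmult_le_compat_l; [lra|].
  replace (q ^ 2) with (/ (/ q * / q)) by (rewrite Rinv_mult, !Rinv_inv; ring).
  apply Rinv_le_contravar; nra.
Qed.

Lemma decreasing_floor_of_snr (f G : R -> R) q S K : 0 < q ->
  (forall P, 0 < P -> f P = 1 / (/ q + G P)) ->
  (forall P, 0 < P -> 0 <= G P <= S) ->
  (forall P1 P2, 0 < P1 -> P1 <= P2 -> G P1 <= G P2) ->
  (forall P, 0 < P -> S - G P <= K / P) ->
  decreasing_floor f (1 / (/ q + S)).
Proof.
  intros Hq Hf HG Hmono Hgap.
  assert (Hu : 0 < / q) by (apply Rinv_0_lt_compat; lra).
  split; [|split].
  - intros P HP; rewrite Hf by exact HP.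
    destruct (HG P HP); pose proof (inv_snr_gap q (G P) S); lra.
  - intros P1 P2 HP1 HP12; rewrite !Hf by lra.
    destruct (HG P1 HP1); pose proof (Hmono P1 P2 HP1 HP12).
    apply Rdiv_le_cross; lra.
  - intros eps Heps.
    assert (HK : 0 <= K).
    { destruct (HG 1 Rlt_0_1); pose proof (Hgap 1 Rlt_0_1); rewrite Rdiv_1_r in *; lra. }
    assert (Hq2 : 0 < q ^ 2) by (apply pow_lt; lra).
    exists (K * q ^ 2 / eps + 1); intros P HP0.
    assert (0 <= K * q ^ 2 / eps) by (apply Rle_mult_inv_pos; nra).
    assert (HP : 0 < P) by lra.
    assert (HKP : K * q ^ 2 < eps * P).
    { replace (K * q ^ 2) with (eps * (K * q ^ 2 / eps)) by (field; lra).
      apply Rmult_lt_compat_l; lra. }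
    rewrite Hf by exact HP; destruct (HG P HP) as [HG0 HGS].
    destruct (inv_snr_gap q (G P) S Hq HG0 HGS) as [Hlo Hhi].
    rewrite Rabs_pos_eq by lra.
    assert ((S - G P) * q ^ 2 <= K / P * q ^ 2)
      by (apply Rmult_le_compat_r; [lra | apply Hgap; exact HP]).
    assert (K / P * q ^ 2 < eps).
    { replace (K / P * q ^ 2) with (K * q ^ 2 / P) by (field; lra).
      apply (Rmult_lt_reg_r P); [exact HP|].
      replace (K * q ^ 2 / P * P) with (K * q ^ 2) by (field; lra); lra. }
    lra.
Qed.

Section SnrTerm.

Variables c s m : R.
Hypotheses (Hc : 0 < c) (Hs : 0 < s) (Hm : 1 <= m).

Lemma snr_term_denom_pos x : 0 <= x -> 0 <= m * x /\ 0 < c + s * m * x.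
Proof. intros Hx; assert (0 <= m * x) by nra; split; nra. Qed.

Lemma snr_term_nonneg x : 0 <= x -> 0 <= m * x / (c + s * m * x).
Proof. intros Hx; apply Rle_mult_inv_pos; apply snr_term_denom_pos, Hx. Qed.

Lemma snr_term_lt x : 0 <= x -> m * x / (c + s * m * x) < / s.
Proof.
  intros Hx; destruct (snr_term_denom_pos x Hx).
  replace (m * x / (c + s * m * x)) with (/ s - c / (s * (c + s * m * x)))
    by (field; lra).
  assert (0 < c / (s * (c + s * m * x))) by (apply Rdiv_lt_0_compat; nra).
  lra.
Qed.

Lemma snr_term_mono x y : 0 <= x -> x <= y ->
  m * x / (c + s * m * x) <= m * y / (c + s * m * y).
Proof.
  intros Hx Hxy; destruct (snr_term_denom_pos x Hx), (snr_term_denom_pos y ltac:(lra)).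
  apply Rdiv_le_cross; [lra | lra |].
  assert (m * x * c <= m * y * c) by (apply Rmult_le_compat_r; nra).
  lra.
Qed.

Lemma snr_term_gap t : 0 < t -> / s - m * t / (c + s * m * t) <= c / (s ^ 2 * t).
Proof.
  intros Ht; destruct (snr_term_denom_pos t ltac:(lra)).
  replace (/ s - m * t / (c + s * m * t)) with (c / (s * (c + s * m * t)))
    by (field; lra).
  assert (s * t <= c + s * m * t) by nra.
  apply Rdiv_le_cross; [nra | apply Rmult_lt_0_compat; [apply pow_lt|]; lra |].
  assert (c * s * (s * t) <= c * s * (c + s * m * t)) by (apply Rmult_le_compat_l; nra).
  lra.
Qed.

End SnrTerm.

Section MultiAntenna.

Variables (sth sn alpha : R) (N : nat) (sv d : nat -> R) (M : nat).
Hypotheses (Hsth : 0 < sth) (Hsn : 0 < sn) (HN : (1 <= N)%nat) (HM : (1 <= M)%nat)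
  (Hsv : forall i, (i < N)%nat -> 0 < sv i).

Local Notation Ssum := (rsum N (fun i => / sv i)).
Local Notation Kd := (rsum N (fun i => sn * Rpower (d i) alpha / sv i ^ 2)).

Lemma pathloss_pos i : 0 < sn * Rpower (d i) alpha.
Proof. apply Rmult_lt_0_compat; [exact Hsn | apply exp_pos]. Qed.

Lemma gM_bounds x : (forall i, (i < N)%nat -> 0 <= x i) ->
  0 <= gM sn alpha N sv d M x <= Ssum.
Proof.
  intros Hx; pose proof (INR_ge1 M HM); unfold gM; split.
  - apply rsum_nonneg; intros i Hi.
    apply snr_term_nonneg; auto using pathloss_pos.
  - apply rsum_le; intros i Hi; left.
    apply snr_term_lt; auto using pathloss_pos.
Qed.

Lemma gM_mono x y : (forall i, (i < N)%nat -> 0 <= x i <= y i) ->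
  gM sn alpha N sv d M x <= gM sn alpha N sv d M y.
Proof.
  intros Hxy; pose proof (INR_ge1 M HM); unfold gM.
  apply rsum_le; intros i Hi; destruct (Hxy i Hi).
  apply snr_term_mono; auto using pathloss_pos.
Qed.

Lemma uniform_allocation P : 0 <= P ->
  0 <= P / INR N /\ rsum N (fun _ => P / INR N) = P.
Proof.
  intros HP; assert (0 < INR N) by (apply lt_0_INR; lia).
  split; [apply Rle_mult_inv_pos; lra|].
  rewrite rsum_const; field; lra.
Qed.

Lemma GM_is_lub P : 0 <= P ->
  is_lub (fun y => exists x : nat -> R,
            (forall i, (i < N)%nat -> 0 <= x i) /\ rsum N x = P
            /\ y = gM sn alpha N sv d M x)
         (GM sn alpha N sv d M P).
Proof.
  intros HP; destruct (uniform_allocation P HP) as [Hu0 Hu].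
  apply (Rsup_is_lub _ (gM sn alpha N sv d M (fun _ => P / INR N))
           (Ssum)).
  - exists (fun _ => P / INR N); auto.
  - intros y (x & Hx & _ & ->); apply gM_bounds, Hx.
Qed.

Lemma GM_ge x : (forall i, (i < N)%nat -> 0 <= x i) ->
  gM sn alpha N sv d M x <= GM sn alpha N sv d M (rsum N x).
Proof. intros Hx; apply (GM_is_lub _ (rsum_nonneg _ _ Hx)); exists x; auto. Qed.

Lemma GM_le P b : 0 <= P ->
  (forall x, (forall i, (i < N)%nat -> 0 <= x i) -> rsum N x = P ->
     gM sn alpha N sv d M x <= b) ->
  GM sn alpha N sv d M P <= b.
Proof. intros HP Hb; apply (GM_is_lub _ HP); intros y (x & Hx & Hs & ->); auto. Qed.

Lemma GM_ge_uniform P : 0 <= P ->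
  gM sn alpha N sv d M (fun _ => P / INR N) <= GM sn alpha N sv d M P.
Proof.
  intros HP; destruct (uniform_allocation P HP) as [Hu0 Hu].
  pose proof (GM_ge (fun _ => P / INR N) (fun _ _ => Hu0)) as Hge.
  rewrite Hu in Hge; exact Hge.
Qed.

Lemma GM_bounds P : 0 <= P ->
  0 <= GM sn alpha N sv d M P <= Ssum.
Proof.
  intros HP; destruct (uniform_allocation P HP) as [Hu0 _]; split.
  - eapply Rle_trans; [apply gM_bounds; intros; exact Hu0 | apply GM_ge_uniform, HP].
  - apply GM_le; [exact HP|]; intros x Hx _; apply gM_bounds, Hx.
Qed.

Lemma GM_mono P1 P2 : 0 < P1 -> P1 <= P2 ->
  GM sn alpha N sv d M P1 <= GM sn alpha N sv d M P2.
Proof.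
  intros HP1 HP12; apply GM_le; [lra|]; intros x Hx Hs.
  set (k := P2 / P1).
  assert (Hk : 1 <= k) by (unfold k; apply (Rmult_le_reg_r P1); [lra|]; field_simplify; lra).
  replace P2 with (rsum N (fun i => k * x i)) by (rewrite rsum_scal, Hs; unfold k; field; lra).
  eapply Rle_trans; [apply (gM_mono x (fun i => k * x i)) | apply GM_ge];
    intros i Hi; specialize (Hx i Hi); nra.
Qed.

Lemma GM_gap P : 0 < P -> Ssum - GM sn alpha N sv d M P <= Kd * INR N / P.
Proof.
  intros HP; pose proof (INR_ge1 M HM).
  assert (HNr : 0 < INR N) by (apply lt_0_INR; lia).
  assert (Ht : 0 < P / INR N) by (apply Rdiv_lt_0_compat; lra).
  pose proof (GM_ge_uniform P ltac:(lra)).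
  apply Rle_trans with (Ssum - gM sn alpha N sv d M (fun _ => P / INR N)); [lra|].
  unfold gM; rewrite <- rsum_minus.
  replace (Kd * INR N / P)
    with (rsum N (fun i => sn * Rpower (d i) alpha / (sv i ^ 2 * (P / INR N)))).
  - apply rsum_le; intros i Hi; apply snr_term_gap; auto using pathloss_pos.
  - replace (Kd * INR N / P) with (INR N / P * Kd) by (field; lra).
    rewrite <- rsum_scal; apply rsum_ext; intros i Hi.
    specialize (Hsv i Hi); field; lra.
Qed.

Lemma MSE_M_decreasing_floor :
  decreasing_floor (MSE_M sth sn alpha N sv d M) (MSE_floor sth N sv).
Proof.
  apply (decreasing_floor_of_snr _ (GM sn alpha N sv d M) sth _ (Kd * INR N)).
  - exact Hsth.
  - intros; reflexivity.
  - intros P HP; apply GM_bounds; lra.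
  - exact GM_mono.
  - exact GM_gap.
Qed.

Lemma PM_pos : 0 < PM sn alpha N sv d M.
Proof.
  pose proof (INR_ge1 M HM); unfold PM.
  apply Rmult_lt_0_compat; [apply Rdiv_lt_0_compat; lra|].
  apply rsum_pos; [exact HN|]; intros i Hi.
  apply Rdiv_lt_0_compat; auto using pathloss_pos.
Qed.

Lemma zetaM_eq h : zetaM sth alpha N sv d M h
  = sth * PM sn alpha N sv d M * rsum N (fun i => Cnorm2 (h i)) / sn.
Proof.
  pose proof (INR_ge1 M HM); unfold zetaM, PM.
  rewrite (rsum_ext N (fun i => sth * Rpower (d i) alpha / sv i)
             (fun i => sth / sn * (sn * Rpower (d i) alpha / sv i)))
    by (intros i Hi; specialize (Hsv i Hi); field; lra).
  rewrite rsum_scal; field; lra.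
Qed.

Lemma GM_PM_ge : 1 / 3 * Ssum <= GM sn alpha N sv d M (PM sn alpha N sv d M).
Proof.
  pose proof (INR_ge1 M HM).
  set (x i := sn * Rpower (d i) alpha / (2 * INR M * sv i)).
  assert (Hx : forall i, (i < N)%nat -> 0 <= x i).
  { intros i Hi; left; apply Rdiv_lt_0_compat; [apply pathloss_pos|].
    specialize (Hsv i Hi); nra. }
  replace (PM sn alpha N sv d M) with (rsum N x).
  - replace (1 / 3 * Ssum) with (gM sn alpha N sv d M x).
    + apply GM_ge, Hx.
    + unfold gM; rewrite <- rsum_scal; apply rsum_ext; intros i Hi; unfold x.
      pose proof (pathloss_pos i); specialize (Hsv i Hi); field; nra.
  - unfold PM; rewrite <- rsum_scal; apply rsum_ext; intros i Hi; unfold x.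
    specialize (Hsv i Hi); field; lra.
Qed.

Lemma MSE_M_PM_le : MSE_M sth sn alpha N sv d M (PM sn alpha N sv d M)
  <= 1 / (/ sth + 1 / 3 * Ssum).
Proof.
  pose proof GM_PM_ge.
  assert (0 < / sth) by (apply Rinv_0_lt_compat, Hsth).
  pose proof (rsum_inv_pos N sv HN Hsv).
  unfold MSE_M; apply Rdiv_le_cross; lra.
Qed.

End MultiAntenna.

Definition Cscale (k : R) (z : Cpx) : Cpx := (k * fst z, k * snd z).

Lemma Cnorm2_scale k z : Cnorm2 (Cscale k z) = k ^ 2 * Cnorm2 z.
Proof. unfold Cnorm2, Cscale; simpl; ring. Qed.

Lemma Cconjmul_scale_self r z : Cconjmul z (Cscale r z) = (r * Cnorm2 z, 0).
Proof. unfold Cconjmul, Cscale, Cnorm2; simpl; f_equal; ring. Qed.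

Lemma Cinner_scale n u k v :
  Cinner n u (fun i => Cscale k (v i)) = Cscale k (Cinner n u v).
Proof.
  unfold Cinner, Cscale, Cconjmul; simpl; f_equal; rewrite <- rsum_scal;
    apply rsum_ext; intros; simpl; ring.
Qed.

Section SingleAntenna.

Variables (sth sn : R) (N : nat) (sv : nat -> R) (h : nat -> Cpx).
Hypotheses (Hsth : 0 < sth) (Hsn : 0 < sn) (HN : (1 <= N)%nat)
  (Hsv : forall i, (i < N)%nat -> 0 < sv i) (Hh : forall i, (i < N)%nat -> Cnz (h i)).

Local Notation Ssum := (rsum N (fun i => / sv i)).
Local Notation Kh := (rsum N (fun i => / (Cnorm2 (h i) * sv i ^ 2))).

Lemma noise_term_nonneg (a : nat -> Cpx) :
  0 <= rsum N (fun i => Cnorm2 (a i) * Cnorm2 (h i) * sv i).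
Proof.
  apply rsum_nonneg; intros i Hi; specialize (Hsv i Hi).
  pose proof (Cnorm2_nonneg (a i)); pose proof (Cnorm2_nonneg (h i)).
  apply Rmult_le_pos; [apply Rmult_le_pos|]; lra.
Qed.

Lemma rho_nonneg a : 0 <= rho sth sn N sv h a.
Proof.
  pose proof (noise_term_nonneg a); pose proof (Cnorm2_nonneg (Cinner N h a)).
  apply Rle_mult_inv_pos; nra.
Qed.

Lemma rho_le_floor a : rho sth sn N sv h a <= sth * Ssum.
Proof.
  pose proof (noise_term_nonneg a) as HD.
  assert (Hw : forall i, (i < N)%nat -> 0 < / sv i)
    by (intros; apply Rinv_0_lt_compat; auto).
  pose proof (Cinner_norm2_le N h a _ Hw) as Hcs.
  rewrite (rsum_ext N _ (fun i => Cnorm2 (a i) * Cnorm2 (h i) * sv i)) in Hcs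
    by (intros i Hi; specialize (Hsv i Hi); field; lra).
  pose proof (rsum_inv_pos N sv HN Hsv).
  unfold rho; apply Rdiv_le_of_le_mult; [lra|].
  assert (sth * Cnorm2 (Cinner N h a)
          <= sth * (rsum N (fun i => Cnorm2 (a i) * Cnorm2 (h i) * sv i)
                    * Ssum))
    by (apply Rmult_le_compat_l; lra).
  assert (0 <= sth * Ssum * sn)
    by (apply Rmult_le_pos; [apply Rmult_le_pos|]; lra).
  lra.
Qed.

Lemma rho_le_power a : rho sth sn N sv h a
  <= sth * rsum N (fun i => Cnorm2 (a i)) * rsum N (fun i => Cnorm2 (h i)) / sn.
Proof.
  pose proof (noise_term_nonneg a) as HD.
  assert (Hw : forall i, (i < N)%nat -> 0 < Cnorm2 (h i))
    by (intros; apply Cnorm2_pos; auto).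
  pose proof (Cinner_norm2_le N h a _ Hw) as Hcs.
  rewrite (rsum_ext N _ (fun i => Cnorm2 (a i))) in Hcs
    by (intros i Hi; specialize (Hw i Hi); field; lra).
  pose proof (Cnorm2_nonneg (Cinner N h a)).
  set (n := Cnorm2 (Cinner N h a)) in *.
  set (AH := rsum N (fun i => Cnorm2 (a i)) * rsum N (fun i => Cnorm2 (h i))) in *.
  replace (sth * rsum N (fun i => Cnorm2 (a i)) * rsum N (fun i => Cnorm2 (h i)))
    with (sth * AH) by (unfold AH; ring).
  unfold rho; fold n; apply Rdiv_le_cross; [lra | lra |].
  assert (sth * n * sn <= sth * AH * sn)
    by (apply Rmult_le_compat_r; [lra | apply Rmult_le_compat_l; lra]).
  assert (0 <= sth * AH * rsum N (fun i => Cnorm2 (a i) * Cnorm2 (h i) * sv i))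
    by (apply Rmult_le_pos; [apply Rmult_le_pos|]; lra).
  lra.
Qed.

Lemma rho_scale_ge a k : 1 <= k ^ 2 ->
  rho sth sn N sv h a <= rho sth sn N sv h (fun i => Cscale k (a i)).
Proof.
  intros Hk; pose proof (noise_term_nonneg a) as HD.
  pose proof (Cnorm2_nonneg (Cinner N h a)).
  unfold rho; rewrite Cinner_scale, Cnorm2_scale.
  rewrite (rsum_ext N (fun i => Cnorm2 (Cscale k (a i)) * Cnorm2 (h i) * sv i)
             (fun i => k ^ 2 * (Cnorm2 (a i) * Cnorm2 (h i) * sv i)))
    by (intros; rewrite Cnorm2_scale; ring).
  rewrite rsum_scal; apply Rdiv_le_cross; [lra | nra |].
  assert (sth * Cnorm2 (Cinner N h a) * sn <= sth * Cnorm2 (Cinner N h a) * sn * k ^ 2).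
  { rewrite <- (Rmult_1_r (sth * Cnorm2 (Cinner N h a) * sn)) at 1.
    apply Rmult_le_compat_l; [apply Rmult_le_pos; nra | exact Hk]. }
  nra.
Qed.

(* conj(h_i) a_i = t / sv_i is real for every i, so h^H a = t * sum_i / sv_i. *)
Definition matched_filter (t : R) (i : nat) : Cpx :=
  Cscale (t / (Cnorm2 (h i) * sv i)) (h i).

Lemma matched_filter_power t :
  rsum N (fun i => Cnorm2 (matched_filter t i))
    = t ^ 2 * Kh.
Proof.
  rewrite <- rsum_scal; apply rsum_ext; intros i Hi.
  unfold matched_filter; rewrite Cnorm2_scale.
  pose proof (Cnorm2_pos _ (Hh i Hi)); specialize (Hsv i Hi); field; lra.
Qed.

Lemma rho_matched_filter t :
  rho sth sn N sv h (matched_filter t)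
    = sth * (t ^ 2 * Ssum ^ 2)
      / (t ^ 2 * Ssum + sn).
Proof.
  assert (Hinner : Cinner N h (matched_filter t) = (t * Ssum, 0)).
  { unfold Cinner; f_equal.
    - rewrite <- rsum_scal; apply rsum_ext; intros i Hi.
      unfold matched_filter; rewrite Cconjmul_scale_self; simpl.
      pose proof (Cnorm2_pos _ (Hh i Hi)); specialize (Hsv i Hi); field; lra.
    - transitivity (rsum N (fun _ => 0)); [|rewrite rsum_const; ring].
      apply rsum_ext; intros i Hi.
      unfold matched_filter; rewrite Cconjmul_scale_self; reflexivity. }
  assert (Hnoise : rsum N (fun i => Cnorm2 (matched_filter t i) * Cnorm2 (h i) * sv i)
                   = t ^ 2 * Ssum).
  { rewrite <- rsum_scal; apply rsum_ext; intros i Hi.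
    unfold matched_filter; rewrite Cnorm2_scale.
    pose proof (Cnorm2_pos _ (Hh i Hi)); specialize (Hsv i Hi); field; lra. }
  unfold rho; rewrite Hinner, Hnoise; unfold Cnorm2; simpl; f_equal; ring.
Qed.

Lemma channel_weight_pos : 0 < Kh.
Proof.
  apply rsum_inv_pos; [exact HN|]; intros i Hi.
  pose proof (Cnorm2_pos _ (Hh i Hi)); specialize (Hsv i Hi).
  apply Rmult_lt_0_compat; [|apply pow_lt]; lra.
Qed.

Lemma matched_filter_at_power P : 0 <= P ->
  exists a, rsum N (fun i => Cnorm2 (a i)) = P
    /\ rho sth sn N sv h a = sth * (P / Kh * Ssum ^ 2) / (P / Kh * Ssum + sn).
Proof.
  intros HP; pose proof channel_weight_pos.
  exists (matched_filter (sqrt (P / Kh))).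
  assert (Ht : sqrt (P / Kh) ^ 2 = P / Kh) by (apply pow2_sqrt, Rle_mult_inv_pos; lra).
  rewrite matched_filter_power, rho_matched_filter, Ht; split; [field; lra | reflexivity].
Qed.

Lemma Ssnr_is_lub P : 0 <= P ->
  is_lub (fun y => exists a : nat -> Cpx,
            rsum N (fun i => Cnorm2 (a i)) = P /\ y = rho sth sn N sv h a)
         (Ssnr sth sn N sv P h).
Proof.
  intros HP; destruct (matched_filter_at_power P HP) as (a & Ha & _).
  apply (Rsup_is_lub _ (rho sth sn N sv h a) (sth * Ssum)).
  - exists a; auto.
  - intros y (b & _ & ->); apply rho_le_floor.
Qed.

Lemma Ssnr_ge a : rho sth sn N sv h a <= Ssnr sth sn N sv (rsum N (fun i => Cnorm2 (a i))) h.
Proof.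
  apply Ssnr_is_lub; [|exists a; auto].
  apply rsum_nonneg; intros; apply Cnorm2_nonneg.
Qed.

Lemma Ssnr_le P b : 0 <= P ->
  (forall a, rsum N (fun i => Cnorm2 (a i)) = P -> rho sth sn N sv h a <= b) ->
  Ssnr sth sn N sv P h <= b.
Proof. intros HP Hb; apply (Ssnr_is_lub P HP); intros y (a & Ha & ->); auto. Qed.

Lemma Ssnr_ge_matched P : 0 <= P ->
  sth * (P / Kh * Ssum ^ 2) / (P / Kh * Ssum + sn) <= Ssnr sth sn N sv P h.
Proof.
  intros HP; destruct (matched_filter_at_power P HP) as (a & Ha & Hrho).
  rewrite <- Hrho, <- Ha; apply Ssnr_ge.
Qed.

Lemma Ssnr_bounds P : 0 <= P -> 0 <= Ssnr sth sn N sv P h <= sth * Ssum.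
Proof.
  intros HP; destruct (matched_filter_at_power P HP) as (a & Ha & _); split.
  - rewrite <- Ha; eapply Rle_trans; [apply rho_nonneg | apply Ssnr_ge].
  - apply Ssnr_le; [exact HP|]; intros b _; apply rho_le_floor.
Qed.

Lemma Ssnr_mono P1 P2 : 0 < P1 -> P1 <= P2 ->
  Ssnr sth sn N sv P1 h <= Ssnr sth sn N sv P2 h.
Proof.
  intros HP1 HP12; apply Ssnr_le; [lra|]; intros a Ha.
  set (k := sqrt (P2 / P1)).
  assert (Hk : k ^ 2 = P2 / P1) by (apply pow2_sqrt, Rle_mult_inv_pos; lra).
  assert (Hk1 : 1 <= k ^ 2)
    by (rewrite Hk; apply (Rmult_le_reg_r P1); [lra|]; field_simplify; lra).
  eapply Rle_trans; [apply (rho_scale_ge a k Hk1)|].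
  replace P2 with (rsum N (fun i => Cnorm2 (Cscale k (a i)))); [apply Ssnr_ge|].
  rewrite (rsum_ext N _ (fun i => k ^ 2 * Cnorm2 (a i))) by (intros; apply Cnorm2_scale).
  rewrite rsum_scal, Ha, Hk; field; lra.
Qed.

Lemma Ssnr_gap P : 0 < P -> sth * Ssum - Ssnr sth sn N sv P h <= sth * sn * Kh / P.
Proof.
  intros HP; pose proof (Ssnr_ge_matched P ltac:(lra)) as Hm.
  pose proof channel_weight_pos as HK.
  pose proof (rsum_inv_pos N sv HN Hsv) as HS.
  set (u := P / Kh) in *.
  assert (Hu : 0 < u) by (apply Rdiv_lt_0_compat; lra).
  replace (sth * sn * Kh / P) with (sth * sn / u) by (unfold u; field; lra).
  assert (sth * Ssum - sth * (u * Ssum ^ 2) / (u * Ssum + sn) <= sth * sn / u); [|lra].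
  replace (sth * Ssum - sth * (u * Ssum ^ 2) / (u * Ssum + sn))
    with (sth * Ssum * sn / (u * Ssum + sn)) by (field; nra).
  apply Rdiv_le_cross; [nra | lra |].
  assert (0 <= sth * sn * sn) by (apply Rmult_le_pos; [apply Rmult_le_pos|]; lra).
  lra.
Qed.

Lemma MSE_s_decreasing_floor :
  decreasing_floor (fun P => MSE_s sth sn N sv P h) (MSE_floor sth N sv).
Proof.
  apply (decreasing_floor_of_snr _ (fun P => Ssnr sth sn N sv P h / sth) sth _ (sn * Kh)).
  - exact Hsth.
  - intros P HP; destruct (Ssnr_bounds P ltac:(lra)).
    unfold MSE_s; field; lra.
  - intros P HP; destruct (Ssnr_bounds P ltac:(lra)); split.
    + apply Rle_mult_inv_pos; lra.
    + apply Rdiv_le_of_le_mult; lra.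
  - intros P1 P2 HP1 HP12; apply Rmult_le_compat_r.
    + left; apply Rinv_0_lt_compat, Hsth.
    + apply Ssnr_mono; assumption.
  - intros P HP; pose proof (Ssnr_gap P HP) as Hgap.
    replace (Ssum - Ssnr sth sn N sv P h / sth)
      with ((sth * Ssum - Ssnr sth sn N sv P h) / sth) by (field; lra).
    replace (sn * Kh / P) with (sth * sn * Kh / P / sth) by (field; lra).
    apply Rmult_le_compat_r; [left; apply Rinv_0_lt_compat, Hsth | exact Hgap].
Qed.

Lemma MSE_s_bounds P : 0 < P ->
  sth / (1 + sth * P * rsum N (fun i => Cnorm2 (h i)) / sn) <= MSE_s sth sn N sv P h
  /\ MSE_s sth sn N sv P h < sth.
Proof.
  intros HP; pose proof (Ssnr_ge_matched P ltac:(lra)) as Hm.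
  pose proof channel_weight_pos as HK.
  pose proof (rsum_inv_pos N sv HN Hsv) as HS.
  assert (Hpos : 0 < Ssnr sth sn N sv P h).
  { eapply Rlt_le_trans; [|exact Hm].
    assert (0 < P / Kh) by (apply Rdiv_lt_0_compat; lra).
    assert (0 < P / Kh * Ssum ^ 2) by (apply Rmult_lt_0_compat; [|apply pow_lt]; lra).
    apply Rdiv_lt_0_compat; nra. }
  assert (Hle : Ssnr sth sn N sv P h <= sth * P * rsum N (fun i => Cnorm2 (h i)) / sn).
  { apply Ssnr_le; [lra|]; intros a Ha; rewrite <- Ha; apply rho_le_power. }
  unfold MSE_s; split.
  - apply Rdiv_le_cross; [lra | lra |]; apply Rmult_le_compat_l; lra.
  - apply (Rmult_lt_reg_r (1 + Ssnr sth sn N sv P h)); [lra|].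
    replace (sth / (1 + Ssnr sth sn N sv P h) * (1 + Ssnr sth sn N sv P h)) with sth
      by (field; lra).
    nra.
Qed.

End SingleAntenna.

Lemma Un_cv_const c : Un_cv (fun _ => c) c.
Proof.
  intros eps Heps; exists 0%nat; intros.
  unfold R_dist; rewrite Rminus_diag, Rabs_R0; exact Heps.
Qed.

Lemma zetaM_cvg sth alpha N sv d h : Un_cv (fun M => zetaM sth alpha N sv d M h) 0.
Proof.
  set (C := rsum N (fun i => Cnorm2 (h i))
            * rsum N (fun i => sth * Rpower (d i) alpha / sv i) / 2).
  apply Un_cv_ext with (fun M => C * / INR M).
  - intros M; unfold zetaM, C, Rdiv; rewrite Rinv_mult; ring.
  - replace 0 with (C * 0) by ring.
    apply CV_mult; [apply Un_cv_const | apply cv_infty_cv_0, INR_cv_infty].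
Qed.

Theorem corollary1 (sth sn alpha : R) (N : nat) (sv d : nat -> R)
  (Hsth : 0 < sth) (Hsn : 0 < sn) (Halpha : 0 < alpha) (HN : (1 <= N)%nat)
  (Hsv : forall i, (i < N)%nat -> 0 < sv i)
  (Hd : forall i, (i < N)%nat -> 0 < d i) :
  (* (a) *)
  (forall M : nat, (1 <= M)%nat ->
     MSE_M sth sn alpha N sv d M (PM sn alpha N sv d M)
       <= 1 / (/ sth + 1 / 3 * rsum N (fun i => / sv i)))
  /\
  (* (b) *)
  (forall h : nat -> Cpx, (forall i, (i < N)%nat -> Cnz (h i)) ->
     forall M : nat, (1 <= M)%nat ->
       sth / (1 + zetaM sth alpha N sv d M h)
         <= MSE_s sth sn N sv (PM sn alpha N sv d M) h
       /\ MSE_s sth sn N sv (PM sn alpha N sv d M) h < sth)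
  /\
  (forall h : nat -> Cpx, Un_cv (fun M => zetaM sth alpha N sv d M h) 0)
  /\
  (* (c) *)
  (forall M : nat, (1 <= M)%nat ->
     (forall P, 0 < P -> MSE_floor sth N sv <= MSE_M sth sn alpha N sv d M P)
     /\ (forall P1 P2, 0 < P1 -> P1 <= P2 ->
           MSE_M sth sn alpha N sv d M P2 <= MSE_M sth sn alpha N sv d M P1)
     /\ (forall eps, 0 < eps -> exists P0, forall P, P0 <= P ->
           Rabs (MSE_M sth sn alpha N sv d M P - MSE_floor sth N sv) < eps))
  /\
  (forall h : nat -> Cpx, (forall i, (i < N)%nat -> Cnz (h i)) ->
     (forall P, 0 < P -> MSE_floor sth N sv <= MSE_s sth sn N sv P h)
     /\ (forall P1 P2, 0 < P1 -> P1 <= P2 ->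
           MSE_s sth sn N sv P2 h <= MSE_s sth sn N sv P1 h)
     /\ (forall eps, 0 < eps -> exists P0, forall P, P0 <= P ->
           Rabs (MSE_s sth sn N sv P h - MSE_floor sth N sv) < eps)).
Proof.
  split; [|split; [|split; [|split]]].
  - intros M HM; exact (MSE_M_PM_le sth sn alpha N sv d M Hsth Hsn HN HM Hsv).
  - intros h Hh M HM; rewrite (zetaM_eq sth sn alpha N sv d M) by assumption.
    apply MSE_s_bounds; try assumption.
    exact (PM_pos sn alpha N sv d M Hsn HN HM Hsv).
  - intros h; apply zetaM_cvg.
  - intros M HM; exact (MSE_M_decreasing_floor sth sn alpha N sv d M Hsth Hsn HN HM Hsv).
  - intros h Hh; exact (MSE_s_decreasing_floor sth sn N sv h Hsth Hsn HN Hsv Hh).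
Qed.
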